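(* The system below has an equilibrium of the form $G_3=(S^*,I_1^*,0,0,R^* )$ with $S^*,I_1^*,R^*>0$ if and only if $S^{**}>\sigma_1$ (equivalently $K>K^*:=\frac{b\sigma_1}{b-\mu_0}$), and in that case it is unique. Moreover, writing $\hat S_1=S^{**}-\sigma_1$, its components satisfy $$S^*+I_1^*=\sigma_1,\qquad I_1^*=\frac{b}{K\alpha_1}(\hat S_1-R^* )=\frac{(\mu_4'-\mu_0)R^*}{\alpha_1R^*+\rho_1},$$ and $R^*$ is the unique root in $(0,\hat S_1)$ of $$f(R,K)=\Big(\hat S_1-R+\tfrac{K}{b}(\mu_0-\mu_4')\Big)R+\frac{\rho_1}{\alpha_1}(\hat S_1-R)=0.$$
   Context: Consider, for $t\ge0$, the system $S'=\big(b(1-\tfrac{N}{K})-\alpha_1I_1-\alpha_2I_2-(\beta_1+\beta_2+\alpha_3)I_{12}-\mu_0\big)S$, $I_1'=\big(b(1-\tfrac{N}{K})+\alpha_1S-\eta_1I_{12}-\gamma_1I_2-\mu_1\big)I_1+\beta_1SI_{12}$, $I_2'=\big(b(1-\tfrac{N}{K})+\alpha_2S-\eta_2I_{12}-\gamma_2I_1-\mu_2\big)I_2+\beta_2SI_{12}$, $I_{12}'=\big(b(1-\tfrac{N}{K})+\alpha_3S+\eta_1I_1+\eta_2I_2-\mu_3\big)I_{12}+(\gamma_1+\gamma_2)I_1I_2$, $R'=\big(b(1-\tfrac{N}{K})-\mu_4'\big)R+\rho_1I_1+\rho_2I_2+\rho_3I_{12}$, where $N=S+I_1+I_2+I_{12}+R$.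 All parameters $b,K,\alpha_i,\beta_i,\gamma_i,\eta_i,\rho_i,\mu_0,\mu_i'$ are positive and $\mu_i=\rho_i+\mu_i'$ for $i=1,2,3$. Standing assumptions: $b>\mu_0$, $b>\mu_i$ ($i=1,2,3$), $b>\mu_4'$, and $\mu_0<\mu_4'<\mu_j'$ for $j=1,2,3$. Set $\sigma_k=(\mu_k-\mu_0)/\alpha_k$ ($k=1,2,3$), assumed to satisfy $\sigma_1<\sigma_2<\sigma_3$, and $S^{**}=\frac{K}{b}(b-\mu_0)$. *)

From mathcomp Require Import all_boot all_order all_algebra.
Set Implicit Arguments. Unset Strict Implicit. Unset Printing Implicit Defensive.
Import Order.TTheory GRing.Theory Num.Theory.
Local Open Scope ring_scope.

Record params (R : realFieldType) := Params {
  b : R; K : R;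
  alpha1 : R; alpha2 : R; alpha3 : R;
  beta1 : R; beta2 : R;
  gamma1 : R; gamma2 : R;
  eta1 : R; eta2 : R;
  rho1 : R; rho2 : R; rho3 : R;
  mu0 : R; mu1p : R; mu2p : R; mu3p : R; mu4p : R }.

Section Model.
Variables (R : realFieldType) (p : params R).

Definition mu1 := rho1 p + mu1p p.
Definition mu2 := rho2 p + mu2p p.
Definition mu3 := rho3 p + mu3p p.

Definition sigma1 := (mu1 - mu0 p) / alpha1 p.
Definition sigma2 := (mu2 - mu0 p) / alpha2 p.
Definition sigma3 := (mu3 - mu0 p) / alpha3 p.

Definition Sss := K p / b p * (b p - mu0 p).
Definition Kstar := b p * sigma1 / (b p - mu0 p).
Definition S1hat := Sss - sigma1.

(* The right-hand sides of the ODE system at state (S, I1, I2, I12, Rr). *)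
Definition logi S I1 I2 I12 Rr := b p * (1 - (S + I1 + I2 + I12 + Rr) / K p).

Definition fS S I1 I2 I12 Rr :=
  (logi S I1 I2 I12 Rr - alpha1 p * I1 - alpha2 p * I2
    - (beta1 p + beta2 p + alpha3 p) * I12 - mu0 p) * S.
Definition fI1 S I1 I2 I12 Rr :=
  (logi S I1 I2 I12 Rr + alpha1 p * S - eta1 p * I12 - gamma1 p * I2 - mu1) * I1
  + beta1 p * S * I12.
Definition fI2 S I1 I2 I12 Rr :=
  (logi S I1 I2 I12 Rr + alpha2 p * S - eta2 p * I12 - gamma2 p * I1 - mu2) * I2
  + beta2 p * S * I12.
Definition fI12 S I1 I2 I12 Rr :=
  (logi S I1 I2 I12 Rr + alpha3 p * S + eta1 p * I1 + eta2 p * I2 - mu3) * I12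
  + (gamma1 p + gamma2 p) * I1 * I2.
Definition fR S I1 I2 I12 Rr :=
  (logi S I1 I2 I12 Rr - mu4p p) * Rr + rho1 p * I1 + rho2 p * I2 + rho3 p * I12.

Definition is_equilibrium S I1 I2 I12 Rr :=
  [/\ fS S I1 I2 I12 Rr = 0, fI1 S I1 I2 I12 Rr = 0, fI2 S I1 I2 I12 Rr = 0,
      fI12 S I1 I2 I12 Rr = 0 & fR S I1 I2 I12 Rr = 0].

Definition is_G3 S I1 Rr :=
  [/\ 0 < S, 0 < I1, 0 < Rr & is_equilibrium S I1 0 0 Rr].

Definition fRK Rr :=
  (S1hat - Rr + K p / b p * (mu0 p - mu4p p)) * Rr + rho1 p / alpha1 p * (S1hat - Rr).

Definition standing :=
  (0 < b p /\ 0 < K p /\ 0 < alpha1 p /\ 0 < alpha2 p /\ 0 < alpha3 p /\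
   0 < beta1 p /\ 0 < beta2 p /\ 0 < gamma1 p /\ 0 < gamma2 p /\
   0 < eta1 p /\ 0 < eta2 p /\ 0 < rho1 p /\ 0 < rho2 p /\ 0 < rho3 p /\
   0 < mu0 p /\ 0 < mu1p p /\ 0 < mu2p p /\ 0 < mu3p p /\ 0 < mu4p p) /\
  (mu0 p < b p /\ mu1 < b p /\ mu2 < b p /\ mu3 < b p /\ mu4p p < b p) /\
  (mu0 p < mu4p p /\ mu4p p < mu1p p /\ mu4p p < mu2p p /\ mu4p p < mu3p p) /\
  (sigma1 < sigma2 /\ sigma2 < sigma3).

End Model.

(* On the face I2 = I12 = 0 the S- and I1-equations pin the logistic factor
   L = b (1 - N/K) to both mu0 + alpha1 I1 and mu1 - alpha1 S, whence
   S + I1 = sigma1 and N = sigma1 + R.  Then L = mu0 + (b/K)(S1hat - R), which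
   gives I1 as a function of R, and the R-equation gives it as another one.
   Equating the two is f(R, K) = 0, a downward parabola in R that is positive
   at 0 and negative at S1hat as soon as S1hat > 0: it has exactly one positive
   root, lying in (0, S1hat), and every such root rebuilds an equilibrium. *)
From mathcomp Require Import all_boot all_order all_algebra.
From mathcomp Require Import ring lra.
Import Order.TTheory GRing.Theory Num.Theory.
Local Open Scope ring_scope.
Set Implicit Arguments. Unset Strict Implicit.

Section DownwardParabola.
Variables (F : realFieldType) (q : F -> F) (B C : F).
Hypothesis qE : forall x, q x = - x ^+ 2 + B * x + C.

Lemma neg_parabola_pos_root_uniq r r' : 0 < C -> 0 < r -> 0 < r' ->
  q r = 0 -> q r' = 0 -> r = r'.
Proof.
rewrite !qE => C_gt0 r_gt0 r'_gt0 qr qr'.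
have : (r - r') * (B - r - r') = 0.
  by rewrite -[RHS](subrr 0) -{1}qr -qr'; ring.
move/eqP; rewrite mulf_eq0 => /orP [|/eqP Br]; first by rewrite subr_eq0 => /eqP.
(* Vieta: two distinct roots would have product -C < 0. *)
have : 0 < r * r' by rewrite mulr_gt0.
nra.
Qed.

End DownwardParabola.

Lemma neg_parabola_root_between (F : rcfType) (q : F -> F) (B C a : F) :
  (forall x, q x = - x ^+ 2 + B * x + C) ->
  0 < C -> 0 < a -> q a < 0 -> exists2 x, 0 < x < a & q x = 0.
Proof.
move=> qE C_gt0 a_gt0; rewrite qE => qa_lt0.
set s := Num.sqrt (B ^+ 2 + 4 * C).
have s2 : s ^+ 2 = B ^+ 2 + 4 * C by rewrite sqr_sqrtr //; nra.
have s_ge0 : 0 <= s by rewrite sqrtr_ge0.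
have : B - s < 0 by nra.
have : 0 < B + s by nra.
exists ((B + s) / 2).
  (* q a < 0 puts a outside [(B - s)/2, (B + s)/2], and (B - s)/2 < 0 < a. *)
  apply/andP; split; first lra.
  rewrite ltNge; apply/negP => a_le.
  have : 0 <= ((B + s) / 2 - a) * (a - (B - s) / 2) by apply: mulr_ge0; lra.
  nra.
have -> : q ((B + s) / 2) = (B ^+ 2 + 4 * C - s ^+ 2) / 4 by rewrite qE; field.
by rewrite s2 subrr mul0r.
Qed.

Section EquilibriumG3.
Variables (R : rcfType) (p : params R).
Implicit Type r : R.

Lemma is_G3E S I1 r : is_G3 p S I1 r <->
  [/\ 0 < S, 0 < I1, 0 < r &
      [/\ logi p S I1 0 0 r = mu0 p + alpha1 p * I1,
          logi p S I1 0 0 r = mu1 p - alpha1 p * S &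
          (logi p S I1 0 0 r - mu4p p) * r + rho1 p * I1 = 0]].
Proof.
rewrite /is_G3 /is_equilibrium /fS /fI1 /fI2 /fI12 /fR.
rewrite !(mulr0, mul0r, addr0, subr0).
split=> -[S_gt0 I1_gt0 r_gt0 eqs]; split=> //.
- case: eqs => /eqP + /eqP + _ _ eR.
  rewrite !mulf_eq0 (gt_eqF S_gt0) (gt_eqF I1_gt0) !orbF !subr_eq0 => /eqP eS /eqP eI.
  split=> //; lra.
- case: eqs => eS eI eR.
  by split=> //; apply/eqP; rewrite mulf_eq0 subr_eq0; apply/orP; left; apply/eqP; lra.
Qed.

Lemma fRKE r : fRK p r = - r ^+ 2
  + (S1hat p + K p / b p * (mu0 p - mu4p p) - rho1 p / alpha1 p) * r
  + rho1 p / alpha1 p * S1hat p.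
Proof. by rewrite /fRK; ring. Qed.

Hypotheses (b_gt0 : 0 < b p) (K_gt0 : 0 < K p).
Hypotheses (alpha1_gt0 : 0 < alpha1 p) (rho1_gt0 : 0 < rho1 p).
Hypotheses (mu0_lt_mu4p : mu0 p < mu4p p) (mu4p_lt_mu1 : mu4p p < mu1 p).

Ltac field_pos := field; do ?[apply/andP; split]; rewrite gt_eqF.

Lemma sigma1_gt0 : 0 < sigma1 p.
Proof. by rewrite /sigma1 divr_gt0 // subr_gt0 (lt_trans mu0_lt_mu4p). Qed.

Lemma alpha1_sigma1 : alpha1 p * sigma1 p = mu1 p - mu0 p.
Proof. by rewrite /sigma1; field_pos. Qed.

Lemma logi_sigma1 r :
  b p * (1 - (sigma1 p + r) / K p) = mu0 p + b p / K p * (S1hat p - r).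
Proof. by rewrite /S1hat /Sss; field_pos. Qed.

(* f(R, K) = 0 says exactly that the two expressions for I1 agree. *)
Lemma fRK_factor r : alpha1 p * fRK p r
  = (alpha1 p * r + rho1 p) * (S1hat p - r) - K p * alpha1 p / b p * ((mu4p p - mu0 p) * r).
Proof. by rewrite /fRK; field_pos. Qed.

Lemma fRK_pos_root_uniq r r' : 0 < S1hat p -> 0 < r -> 0 < r' ->
  fRK p r = 0 -> fRK p r' = 0 -> r = r'.
Proof.
move=> S1hat_gt0; apply: (neg_parabola_pos_root_uniq fRKE).
by rewrite !mulr_gt0 ?invr_gt0.
Qed.

Lemma fRK_root_exists : 0 < S1hat p -> exists2 r, 0 < r < S1hat p & fRK p r = 0.
Proof.
move=> S1hat_gt0; apply: (neg_parabola_root_between fRKE); rewrite ?mulr_gt0 ?invr_gt0 //.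
have -> : fRK p (S1hat p) = - (K p / b p * (mu4p p - mu0 p) * S1hat p).
  by rewrite /fRK; ring.
by rewrite oppr_lt0 !mulr_gt0 // ?invr_gt0 // subr_gt0.
Qed.

Definition I1_of_R r := (mu4p p - mu0 p) * r / (alpha1 p * r + rho1 p).

Section AtG3.
Variables (S I1 r : R).
Hypothesis G3 : is_G3 p S I1 r.

Lemma G3_sum : S + I1 = sigma1 p.
Proof.
have /is_G3E [_ _ _ [eS eI _]] := G3.
by apply: (mulfI (lt0r_neq0 alpha1_gt0)); rewrite alpha1_sigma1; lra.
Qed.

Lemma G3_logi : logi p S I1 0 0 r = mu0 p + b p / K p * (S1hat p - r).
Proof. by rewrite /logi !addr0 G3_sum logi_sigma1. Qed.

Lemma G3_I1_logistic : I1 = b p / (K p * alpha1 p) * (S1hat p - r).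
Proof.
have /is_G3E [_ _ _ [eS _ _]] := G3.
have e : alpha1 p * I1 = b p / K p * (S1hat p - r) by rewrite G3_logi in eS; lra.
by apply: (mulfI (lt0r_neq0 alpha1_gt0)); rewrite e; field_pos.
Qed.

Lemma G3_I1_of_R : I1 = I1_of_R r.
Proof.
have /is_G3E [_ _ r_gt0 [eS _ eR]] := G3.
have e : I1 * (alpha1 p * r + rho1 p) = (mu4p p - mu0 p) * r by rewrite eS in eR; lra.
by rewrite /I1_of_R -e mulfK // lt0r_neq0 // addr_gt0 // mulr_gt0.
Qed.

Lemma G3_fRK_root : 0 < r /\ r < S1hat p /\ fRK p r = 0.
Proof.
have /is_G3E [_ I1_gt0 r_gt0 _] := G3.
have e1 : S1hat p - r = K p * alpha1 p / b p * I1.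
  by rewrite G3_I1_logistic; field_pos.
have e2 : (mu4p p - mu0 p) * r = I1 * (alpha1 p * r + rho1 p).
  by rewrite G3_I1_of_R divfK // lt0r_neq0 // addr_gt0 // mulr_gt0.
split=> //; split.
  by rewrite -subr_gt0 e1 !mulr_gt0 // invr_gt0.
apply: (mulfI (lt0r_neq0 alpha1_gt0)).
by rewrite fRK_factor e1 e2 mulr0; ring.
Qed.

End AtG3.

Lemma G3_of_fRK_root r : 0 < r -> fRK p r = 0 ->
  is_G3 p (sigma1 p - I1_of_R r) (I1_of_R r) r.
Proof.
move=> r_gt0 root; set I1 := I1_of_R r.
have den_gt0 : 0 < alpha1 p * r + rho1 p by rewrite addr_gt0 // mulr_gt0.
have I1_den : I1 * (alpha1 p * r + rho1 p) = (mu4p p - mu0 p) * r.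
  by rewrite divfK // lt0r_neq0.
have I1_gt0 : 0 < I1 by rewrite divr_gt0 // mulr_gt0 // subr_gt0.
have S1hat_r : S1hat p - r = K p * alpha1 p / b p * I1.
  apply: (mulIf (lt0r_neq0 den_gt0)).
  by have := fRK_factor r; rewrite root mulr0 -I1_den; lra.
(* I1 (alpha1 r + rho1) = (mu4' - mu0) r < (mu1 - mu0) r = alpha1 sigma1 r *)
have I1_lt_sigma1 : I1 < sigma1 p.
  have : 0 < sigma1 p * rho1 p by rewrite mulr_gt0 // sigma1_gt0.
  have : mu4p p * r < mu1 p * r by rewrite ltr_pM2r.
  have := alpha1_sigma1; nra.
have logi_I1 : logi p (sigma1 p - I1) I1 0 0 r = mu0 p + alpha1 p * I1.
  by rewrite /logi !addr0 subrK logi_sigma1 S1hat_r; field_pos.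
apply/is_G3E; split; rewrite ?subr_gt0 //; rewrite logi_I1; split=> //.
- by rewrite mulrBr alpha1_sigma1; ring.
- by rewrite -[RHS](subrr ((mu4p p - mu0 p) * r)) -{1}I1_den; ring.
Qed.

Lemma G3_uniq S I1 r S' I1' r' : is_G3 p S I1 r -> is_G3 p S' I1' r' ->
  [/\ S = S', I1 = I1' & r = r'].
Proof.
move=> G3 G3'.
have [r_gt0 [r_lt root]] := G3_fRK_root G3.
have [r'_gt0 [_ root']] := G3_fRK_root G3'.
have er : r = r' by apply: fRK_pos_root_uniq root root'; rewrite // (lt_trans r_gt0).
have eI1 : I1 = I1' by rewrite (G3_I1_logistic G3) (G3_I1_logistic G3') er.
by split=> //; apply: (addIr I1); rewrite (G3_sum G3) eI1 (G3_sum G3').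
Qed.

Hypothesis mu0_lt_b : mu0 p < b p.

Lemma sigma1_lt_Sss : (sigma1 p < Sss p) = (Kstar p < K p).
Proof.
have b_mu0_gt0 : 0 < b p - mu0 p by rewrite subr_gt0.
rewrite /Kstar /Sss mulrAC (ltr_pdivlMr _ _ b_gt0) (ltr_pdivrMr _ _ b_mu0_gt0).
by rewrite mulrC.
Qed.

End EquilibriumG3.

Lemma standing_facts (R : rcfType) (p : params R) : standing p ->
  [/\ 0 < b p, 0 < K p, 0 < alpha1 p, 0 < rho1 p &
      [/\ mu0 p < b p, mu0 p < mu4p p & mu4p p < mu1 p]].
Proof. by rewrite /standing /mu1 => hst; split; [lra..| split; lra]. Qed.

Theorem mainTheorem7 (R : rcfType) (p : params R) :
  standing p ->
  [/\ (exists S I1 Rr, is_G3 p S I1 Rr) <-> sigma1 p < Sss p,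
      sigma1 p < Sss p <-> Kstar p < K p,
      (forall S I1 Rr S' I1' Rr', is_G3 p S I1 Rr -> is_G3 p S' I1' Rr' ->
         [/\ S = S', I1 = I1' & Rr = Rr'])
    & (forall S I1 Rr, is_G3 p S I1 Rr ->
         [/\ S + I1 = sigma1 p,
             I1 = b p / (K p * alpha1 p) * (S1hat p - Rr),
             I1 = (mu4p p - mu0 p) * Rr / (alpha1 p * Rr + rho1 p),
             (0 < Rr /\ Rr < S1hat p /\ fRK p Rr = 0)
           & forall Rr', 0 < Rr' -> Rr' < S1hat p -> fRK p Rr' = 0 -> Rr' = Rr])].
Proof.
move=> /standing_facts [b_gt0 K_gt0 alpha1_gt0 rho1_gt0 [mu0_lt_b mu0_lt_mu4p mu4p_lt_mu1]].
have G3_root S I1 r : is_G3 p S I1 r -> 0 < r /\ r < S1hat p /\ fRK p r = 0.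
  exact: G3_fRK_root.
split.
- split=> [[S [I1 [r /G3_root [r_gt0 [r_lt _]]]]] | lt].
    by rewrite -subr_gt0 -/(S1hat p) (lt_trans r_gt0).
  have S1hat_gt0 : 0 < S1hat p by rewrite subr_gt0.
  have [r /andP [r_gt0 _] root] :=
    fRK_root_exists b_gt0 K_gt0 alpha1_gt0 rho1_gt0 mu0_lt_mu4p S1hat_gt0.
  by exists (sigma1 p - I1_of_R p r), (I1_of_R p r), r; apply: G3_of_fRK_root.
- by rewrite sigma1_lt_Sss.
- by move=> S I1 r S' I1' r'; apply: G3_uniq.
- move=> S I1 r G3; have [r_gt0 [r_lt root]] := G3_root _ _ _ G3.
  split=> //.
  + exact (G3_sum alpha1_gt0 G3).
  + exact (G3_I1_logistic b_gt0 K_gt0 alpha1_gt0 G3).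
  + exact (G3_I1_of_R alpha1_gt0 rho1_gt0 G3).
  move=> r' r'_gt0 _ root'.
  by apply: fRK_pos_root_uniq root' root; rewrite // (lt_trans r_gt0).
Qed.
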